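(* Let $Z$ be an $n\times n$ matrix of i.i.d. standard normal entries. There is a universal constant $C>0$ such that $$\mathrm{Var}(\mathrm{TV}(Z)) \leq C\,n(n-1).$$
   Context: $\mathrm{TV}(\theta) = \sum_{(u,v)\in E_n}|\theta_u-\theta_v|$, where $E_n$ is the edge set of the $n\times n$ grid graph on $[n]\times[n]$ (pairs of vertices at $\ell_1$-distance 1). *)

From HB Require Import structures.
From mathcomp Require Import all_boot all_order all_algebra.
From mathcomp Require Import all_classical all_reals all_analysis.
Set Implicit Arguments. Unset Strict Implicit. Unset Printing Implicit Defensive.
Import Order.TTheory GRing.Theory Num.Theory.
Local Open Scope ring_scope.
Local Open Scope classical_set_scope.

Definition grid_vertex (n : nat) := ('I_n * 'I_n)%type.

Definition grid_adj (n : nat) (u v : grid_vertex n) : bool :=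
  (`|(u.1 : nat) - (v.1 : nat)| + `|(u.2 : nat) - (v.2 : nat)|)%N == 1%N.

(* lexicographic strict order, used to pick each unordered edge {u,v} once *)
Definition grid_lt (n : nat) (u v : grid_vertex n) : bool :=
  ((u.1 : nat) < v.1)%N || (((u.1 : nat) == v.1) && ((u.2 : nat) < v.2)%N).

Definition TV {R : numDomainType} (n : nat) (theta : grid_vertex n -> R) : R :=
  \sum_(u : grid_vertex n) \sum_(v : grid_vertex n | grid_adj u v && grid_lt u v)
     `|theta u - theta v|.

(* Mutual independence of a finite family of real random variables:
   product rule for every choice of measurable sets (taking A i = setT
   recovers the product rule for every subfamily). *)
Definition mutually_independent {d} {T : measurableType d} {R : realType}
  (P : probability T R) (I : finType) (X : I -> T -> R) : Prop :=
  forall A : I -> set R, (forall i, measurable (A i)) ->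
    P (\bigcap_(i in [set: I]) (X i @^-1` A i)) =
    (\prod_(i : I) P (X i @^-1` A i))%E.

Definition std_normal_rv {d} {T : measurableType d} {R : realType}
  (P : probability T R) (X : T -> R) : Prop :=
  forall A : set R, measurable A -> P (X @^-1` A) = normal_prob 0 1 A.

(* Write TV(Z) as the sum over the grid edges p of Y_p = |Z_p1 - Z_p2|, so that
   Var TV(Z) is the sum of Cov(Y_p, Y_q) over pairs of edges.  If p and q share no
   vertex, Y_p and Y_q are independent: |x - y| is the Lebesgue measure of the
   interval between x and y, so by Tonelli E[Y_p Y_q] is a double integral of
   probabilities of intersections of events {Z_a <= t < Z_b}, and these factor by
   mutual independence.  Otherwise Cov(Y_p, Y_q) <= sqrt(Var Y_p Var Y_q) <= 4 E[Z^2].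
   Each edge meets at most 16 edges and there are at most
   4 n^2 <= 8 n (n - 1) edges (n >= 2), whence Var TV(Z) <= 512 E[Z^2] n (n - 1). *)

From HB Require Import structures.
From mathcomp Require Import all_boot all_order all_algebra.
From mathcomp Require Import all_classical all_reals all_analysis.
From mathcomp Require Import measurable_realfun zify ring lra.
Import Order.TTheory GRing.Theory Num.Theory.
Set Implicit Arguments. Unset Strict Implicit. Unset Printing Implicit Defensive.

Section grid_combinatorics.
Variable n : nat.
Local Notation V := (grid_vertex n).

Definition grid_edge (p : V * V) : bool := grid_adj p.1 p.2 && grid_lt p.1 p.2.

Definition edges_meet (p q : V * V) : bool :=
  [|| p.1 == q.1, p.1 == q.2, p.2 == q.1 | p.2 == q.2].

Lemma grid_adjC (u v : V) : grid_adj u v = grid_adj v u.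
Proof. by rewrite /grid_adj distnC [X in (_ + X)%N]distnC. Qed.

Lemma grid_adj_neq (u v : V) : grid_adj u v -> u != v.
Proof. by apply: contraTneq => ->; rewrite /grid_adj !distnn. Qed.

Lemma grid_degree_le (z : V) : \sum_(v : V) grid_adj z v <= 4.
Proof.
rewrite -big_mkcond /= sum1_card cardE.
pose coords (v : V) := (val v.1, val v.2).
have coords_inj : injective coords.
  by move=> [a b] [c e] [/val_inj -> /val_inj ->].
rewrite -(size_map coords).
apply: (@uniq_leq_size _ _ [:: (z.1.-1, val z.2); (z.1.+1, val z.2);
                               (val z.1, z.2.-1); (val z.1, z.2.+1)]).
  by rewrite (map_inj_uniq coords_inj) enum_uniq.
move=> _ /mapP [[[a ?] [b ?]] + ->]; rewrite mem_enum => /eqP /=.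
rewrite !inE !xpair_eqE; case: z => [[c ?] [e ?]] /=.
case: (leqP c a) => [ca|/ltnW ac]; [rewrite (distnEr ca)|rewrite (distnEl ac)];
  (case: (leqP e b) => [eb|/ltnW be]; [rewrite (distnEr eb)|rewrite (distnEl be)]); lia.
Qed.

Lemma sum_grid_adj_fst_le (z : V) : \sum_(p : V * V) (grid_adj p.1 p.2 && (p.1 == z)) <= 4.
Proof.
rewrite -(pair_bigA _ (fun a b => grid_adj a b && (a == z) : nat)) (bigD1 z) //=.
rewrite [X in _ + X]big1 ?addn0.
  by under eq_bigr do rewrite eqxx andbT; exact: grid_degree_le.
by move=> a /negPf az; apply: big1 => b _; rewrite az andbF.
Qed.

Lemma sum_grid_adj_snd_le (z : V) : \sum_(p : V * V) (grid_adj p.1 p.2 && (p.2 == z)) <= 4.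
Proof.
rewrite (reindex_inj (can_inj (@swap_pairK V V))) /=.
by under eq_bigr do rewrite grid_adjC; exact: sum_grid_adj_fst_le.
Qed.

Lemma sum_edges_meet_le (p : V * V) : \sum_(q | grid_edge q) edges_meet p q <= 16.
Proof.
have incident z (i : bool) : \sum_(q | grid_edge q) (z == if i then q.1 else q.2) <= 4.
  case: i; [apply: leq_trans (sum_grid_adj_fst_le z)|apply: leq_trans (sum_grid_adj_snd_le z)];
  by rewrite big_mkcond leq_sum // => q _; rewrite /grid_edge eq_sym;
     case: (grid_adj _ _); case: (grid_lt _ _).
apply: (@leq_trans (\sum_(q | grid_edge q) ((p.1 == q.1) + (p.1 == q.2)
   + (p.2 == q.1) + (p.2 == q.2)))).
  apply: leq_sum => q _; rewrite /edges_meet.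
  by case: (p.1 == q.1); case: (p.1 == q.2); case: (p.2 == q.1); case: (p.2 == q.2).
rewrite !big_split /=.
by rewrite -[16]/(4 + 4 + 4 + 4) !leq_add // ?(incident _ true) ?(incident _ false).
Qed.

Lemma sum_grid_edges_le : \sum_(p | grid_edge p) 1 <= 4 * (n * n).
Proof.
apply: (@leq_trans (\sum_(z : V) \sum_(p : V * V) (grid_adj p.1 p.2 && (p.1 == z)))).
  rewrite exchange_big big_mkcond leq_sum // => p _.
  rewrite (bigD1 p.1) //= eqxx andbT /grid_edge.
  by case: (grid_adj _ _); case: (grid_lt _ _).
apply: (@leq_trans (\sum_(z : V) 4)).
  by apply: leq_sum => z _; exact: sum_grid_adj_fst_le.
by rewrite sum_nat_const card_prod card_ord mulnC.
Qed.

Lemma grid_edge_small (p : V * V) : n <= 1 -> grid_edge p = false.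
Proof.
move=> n_le1; have ord_eq (i j : 'I_n) : i = j.
  by apply: val_inj; move: (ltn_ord i) (ltn_ord j) => /=; lia.
case: p => [[a b] [c e]]; rewrite /grid_edge /= (ord_eq c a) (ord_eq e b).
by rewrite /grid_adj !distnn.
Qed.

Lemma sum_meeting_edge_pairs_le :
  \sum_(p | grid_edge p) \sum_(q | grid_edge q) edges_meet p q <= 128 * (n * (n - 1)).
Proof.
have [n_le1|n_gt1] := leqP n 1; first by rewrite big_pred0 // => p; exact: grid_edge_small.
apply: (@leq_trans (16 * \sum_(p | grid_edge p) 1)).
  by rewrite big_distrr leq_sum // => p _; exact: sum_edges_meet_le.
have := sum_grid_edges_le; nia.
Qed.

End grid_combinatorics.

Local Open Scope ring_scope.
Local Open Scope classical_set_scope.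

Section section_products.
Local Open Scope ereal_scope.
Context d1 d2 (T1 : measurableType d1) (T2 : measurableType d2) (R : realType).
Variables (m1 : {sigma_finite_measure set T1 -> \bar R})
          (m2 : {sigma_finite_measure set T2 -> \bar R}).

Lemma integral_measure_xsection (C : set (T1 * T2)) : measurable C ->
  \int[m1]_x m2 (xsection C x) = \int[m2]_t m1 (ysection C t).
Proof.
move=> mC; have := indic_fubini_tonelli m1 m2 mC.
by rewrite indic_fubini_tonelli_FE // indic_fubini_tonelli_GE.
Qed.

Variables (A B : set (T1 * T2)).
Hypotheses (mA : measurable A) (mB : measurable B).

Let measure_xsectionE (C : set (T1 * T2)) : measurable C ->
  forall x, m2 (xsection C x) = \int[m2]_t (\1_C (x, t))%:E.
Proof. by move=> mC x; have := congr1 (@^~ x) (indic_fubini_tonelli_FE m2 mC). Qed.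

Let measurable_indic_pair (C : set (T1 * T2)) : measurable C ->
  measurable_fun setT (fun z : T1 * T2 => (\1_C z : R)%:E).
Proof. by move=> mC; apply/measurable_EFinP; exact: measurable_indic. Qed.

Lemma integral_measure_xsectionM :
  \int[m1]_x (m2 (xsection A x) * m2 (xsection B x)) =
  \int[m2]_t \int[m2]_s m1 (ysection A t `&` ysection B s).
Proof.
have mxB : measurable_fun setT (fun x => m2 (xsection B x)).
  exact: measurable_fun_xsection.
transitivity (\int[m1]_x \int[m2]_t ((\1_A (x, t))%:E * m2 (xsection B x))).
  apply: eq_integral => x _; rewrite measure_xsectionE // ge0_integralZr //.
  by apply: measurableT_comp (measurable_indic_pair mA) _; exact: measurable_pair1.
rewrite (fubini_tonelli (fun z => (\1_A z)%:E * m2 (xsection B z.1))) /=; last 2 first.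
- apply: emeasurable_funM; first exact: measurable_indic_pair.
  exact: measurableT_comp mxB measurable_fst.
- by move=> z; rewrite mule_ge0 // lee_fin.
apply: eq_integral => t _.
transitivity (\int[m1]_x \int[m2]_s ((\1_(ysection A t) x)%:E * (\1_B (x, s))%:E)).
  apply: eq_integral => x _; rewrite measure_xsectionE // -ge0_integralZl //.
  - by apply: eq_integral => s _; rewrite !indicE mem_ysection.
  - by apply: measurableT_comp (measurable_indic_pair mB) _; exact: measurable_pair1.
rewrite (fubini_tonelli (fun z => (\1_(ysection A t) z.1)%:E * (\1_B z)%:E)) /=; last 2 first.
- apply: emeasurable_funM; last exact: measurable_indic_pair.
  apply/measurable_EFinP; apply: measurableT_comp measurable_fst.
  by apply: measurable_indic; exact: measurable_ysection.
- by move=> z; rewrite mule_ge0 // lee_fin.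
apply: eq_integral => s _.
transitivity (\int[m1]_x (\1_(ysection A t `&` ysection B s) x)%:E).
  by apply: eq_integral => x _; rewrite indicI /= EFinM !indicE !mem_ysection.
by rewrite integral_indic ?setIT //; apply: measurableI; exact: measurable_ysection.
Qed.

Lemma integral_measure_xsectionM_indep :
  (forall t s, m1 (ysection A t `&` ysection B s) = m1 (ysection A t) * m1 (ysection B s)) ->
  \int[m1]_x (m2 (xsection A x) * m2 (xsection B x)) =
  \int[m1]_x m2 (xsection A x) * \int[m1]_x m2 (xsection B x).
Proof.
move=> indep; have measurable_ysec (C : set (T1 * T2)) :
    measurable C -> measurable_fun setT (fun t => m1 (ysection C t)).
  by move=> mC; exact: measurable_fun_ysection.
rewrite integral_measure_xsectionM !integral_measure_xsection //.
rewrite -ge0_integralZr //; last 2 first.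
- exact: measurable_ysec.
- exact: integral_ge0.
apply: eq_integral => t _; rewrite -ge0_integralZl //; last exact: measurable_ysec.
by apply: eq_integral => s _; exact: indep.
Qed.

End section_products.

Section measure_setUI.
Local Open Scope ereal_scope.
Context d (T : measurableType d) (R : realType) (m : {measure set T -> \bar R}).

Lemma measure_setUI_mul (E1 E2 F : set T) :
  measurable E1 -> measurable E2 -> measurable F -> E1 `&` E2 = set0 ->
  m (E1 `&` F) = m E1 * m F -> m (E2 `&` F) = m E2 * m F ->
  m ((E1 `|` E2) `&` F) = m (E1 `|` E2) * m F.
Proof.
move=> mE1 mE2 mF E12 E1F E2F.
have disjF : (E1 `&` F) `&` (E2 `&` F) = set0 by rewrite setIACA E12 set0I.
rewrite setIUl !measureU //; try exact: measurableI.
by rewrite ge0_muleDl // -E1F -E2F.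
Qed.

End measure_setUI.

Section Lfun2.
Context {R : realType} {d} {T : measurableType d} (mu : {measure set T -> \bar R}).

Lemma Lfun2_sqr_lty (f : T -> R) : measurable_fun setT f ->
  (\int[mu]_x (f x ^+ 2)%:E < +oo)%E -> f \in Lfun mu 2%:E.
Proof.
move=> mf fin; rewrite inE; apply/andP; split; first by rewrite inE.
rewrite inE /= /finite_norm; apply: (@lty_poweRy _ _ 2) => //.
rewrite powR_Lnorm // (eq_integral (fun x => (f x ^+ 2)%:E)) // => x _.
by rewrite /= powR_mulrn ?normr_ge0 // real_normK ?num_real.
Qed.

End Lfun2.

Section variance_sum.
Local Open Scope ereal_scope.
Context d (T : measurableType d) (R : realType) (P : probability T R).

Lemma Lfun2_sum (J : Type) (r : seq J) (Pr : pred J) (F : J -> T -> R) :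
  (forall j, Pr j -> F j \in Lfun P 2%:E) -> (\sum_(j <- r | Pr j) F j)%R \in Lfun P 2%:E.
Proof. by move=> F2; apply: rpred_sum => [|? j Pj]; [exact: lee1n|exact: F2]. Qed.

Lemma covariance_sumr (X : T -> R) (J : Type) (r : seq J) (Pr : pred J) (F : J -> T -> R) :
  X \in Lfun P 2%:E -> (forall j, Pr j -> F j \in Lfun P 2%:E) ->
  covariance P X (\sum_(j <- r | Pr j) F j)%R = \sum_(j <- r | Pr j) covariance P X (F j).
Proof.
move=> X2 F2; elim: r => [|j r IH].
  by rewrite !big_nil -[0%R]/(cst 0%R) covariance_cst_r.
rewrite !big_cons; case: ifP => // Pj.
by rewrite -IH; apply: covarianceDr; rewrite ?Lfun2_sum //; exact: F2.
Qed.

Lemma covariance_suml (X : T -> R) (J : Type) (r : seq J) (Pr : pred J) (F : J -> T -> R) :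
  X \in Lfun P 2%:E -> (forall j, Pr j -> F j \in Lfun P 2%:E) ->
  covariance P (\sum_(j <- r | Pr j) F j)%R X = \sum_(j <- r | Pr j) covariance P (F j) X.
Proof.
move=> X2 F2; rewrite covarianceC covariance_sumr //.
by apply: eq_bigr => j _; rewrite covarianceC.
Qed.

Lemma variance_sum_le (I : finType) (Pr : pred I) (Y : I -> T -> R) (dep : rel I) (B : R) :
  (forall i, Pr i -> Y i \in Lfun P 2%:E) -> (forall i, Pr i -> 'V_P[Y i] <= B%:E) ->
  (forall i j, Pr i -> Pr j -> ~~ dep i j -> covariance P (Y i) (Y j) = 0) ->
  'V_P[(\sum_(i | Pr i) Y i)%R] <= ((\sum_(i | Pr i) \sum_(j | Pr j) dep i j)%N%:R * B)%:E.
Proof.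
move=> Y2 VY indep.
have cov_le i j : Pr i -> Pr j -> covariance P (Y i) (Y j) <= ((dep i j)%:R * B)%:E.
  move=> Pi Pj; have [dij|ndij] := boolP (dep i j); last by rewrite indep // mul0r.
  have B0 : 0 <= B%:E by apply: le_trans (variance_ge0 _ _) (VY i Pi).
  have sqrtV k : Pr k -> sqrte 'V_P[Y k] <= sqrte B%:E.
    by move=> Pk; rewrite lee_sqrt ?variance_ge0 ?VY.
  apply: le_trans (covariance_le (Y2 i Pi) (Y2 j Pj)) _.
  apply: le_trans (lee_pmul (sqrte_ge0 _) (sqrte_ge0 _) (sqrtV i Pi) (sqrtV j Pj)) _.
  by rewrite -expe2 sqr_sqrte // mul1r.
rewrite /variance covariance_suml ?Lfun2_sum //.
rewrite natr_sum mulr_suml -sumEFin; apply: lee_sum => i Pi.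
rewrite covariance_sumr ?Y2 // natr_sum mulr_suml -sumEFin; apply: lee_sum => j Pj.
exact: cov_le.
Qed.

End variance_sum.

Section normal_second_moment.
Context {R : realType}.
Local Notation mu := (@lebesgue_measure R).

Lemma integral_normal_prob (m s : R) (f : R -> \bar R) :
  measurable_fun setT f -> (forall x, 0 <= f x)%E ->
  (\int[normal_prob m s]_x f x = \int[mu]_x (f x * (normal_pdf m s x)%:E))%E.
Proof.
move=> mf f0; have dom := @normal_prob_dominates R m s.
rewrite -(Radon_Nikodym_SigmaFinite.change_of_variables dom) //.
have mpdf : measurable_fun setT (fun x => (normal_pdf m s x)%:E).
  by apply/measurable_EFinP; exact: measurable_normal_pdf.
apply: ae_eq_integral => //.
- apply: emeasurable_funM => //.
  exact: measurable_int (Radon_Nikodym_SigmaFinite.f_integrable dom).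
- exact: emeasurable_funM.
apply: ae_eqe_mul2l; apply: integral_ae_eq => //.
- exact: Radon_Nikodym_SigmaFinite.f_integrable.
- by move=> E _ mE; rewrite -Radon_Nikodym_SigmaFinite.f_integral.
Qed.

(* with y = x^2/4: x^2 e^(-x^2/2) = 4 y e^(-y) e^(-y) and y <= e^y *)
Lemma sqr_expR_le (x : R) : x ^+ 2 * expR (- x ^+ 2 / 2) <= 4 * expR (- x ^+ 2 / 4).
Proof.
set y := x ^+ 2 / 4; have y0 : 0 <= y by rewrite divr_ge0 ?sqr_ge0.
have -> : - x ^+ 2 / 4 = - y by rewrite /y mulNr.
have -> : - x ^+ 2 / 2 = - y + - y by rewrite /y; lra.
have -> : x ^+ 2 = 4 * y by rewrite /y; lra.
rewrite expRD -mulrA ler_pM2l ?ltr0n // mulrA ler_piMl ?expR_ge0 //.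
rewrite expRN ler_pdivrMr ?expR_gt0 // mul1r.
by apply: le_trans (expR_ge1Dx y); lra.
Qed.

Lemma normal_prob_sqr_lty : (\int[normal_prob (0 : R) 1]_x (x ^+ 2)%:E < +oo)%E.
Proof.
have msqr : measurable_fun setT (fun x : R => (x ^+ 2)%:E).
  by apply/measurable_EFinP; exact: measurable_funX.
rewrite integral_normal_prob //; last by move=> x; rewrite lee_fin sqr_ge0.
set s : R := Num.sqrt 2.
have s0 : s != 0 by rewrite sqrtr_eq0 -ltNge ltr0n.
have s2 : s ^+ 2 = 2 by rewrite sqr_sqrtr // ler0n.
pose M := 4 * normal_peak (1 : R) / normal_peak s.
apply: (@le_lt_trans _ _ (\int[mu]_x (M * normal_pdf 0 s x)%:E)%E).
  apply: ge0_le_integral => //.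
  - by move=> x _; rewrite -EFinM lee_fin mulr_ge0 ?sqr_ge0 ?normal_pdf_ge0.
  - by apply: emeasurable_funM => //; apply/measurable_EFinP; exact: measurable_normal_pdf.
  - by apply/measurable_EFinP; apply: measurable_funM => //; exact: measurable_normal_pdf.
  move=> x _; rewrite -EFinM lee_fin /normal_pdf oner_eq0 (negbTE s0) /normal_fun.
  rewrite subr0 s2 expr1n /M mulrCA.
  have -> : (2 *+ 2 : R) = 4 by rewrite -mulr_natr; lra.
  rewrite [leRHS]mulrA divfK ?gt_eqF ?normal_peak_gt0 // -[leRHS]mulrA [leRHS]mulrCA.
  by rewrite ler_pM2l ?normal_peak_gt0 ?oner_neq0 // sqr_expR_le.
under eq_integral do rewrite EFinM.
rewrite integralZl //= ?integral_normal_pdf ?mule1 ?ltry //.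
exact: integrable_normal_pdf.
Qed.

(* This is 1, but only its finiteness matters here. *)
Definition std_normal_moment2 : R := fine (\int[normal_prob (0 : R) 1]_x (x ^+ 2)%:E).

Lemma std_normal_moment2E :
  (\int[normal_prob (0 : R) 1]_x (x ^+ 2)%:E)%E = (std_normal_moment2)%:E.
Proof.
rewrite fineK // ge0_fin_numE ?normal_prob_sqr_lty //.
by apply: integral_ge0 => x _; rewrite lee_fin sqr_ge0.
Qed.

Lemma std_normal_moment2_ge0 : 0 <= std_normal_moment2.
Proof.
rewrite /std_normal_moment2 fine_ge0 //.
by apply: integral_ge0 => x _; rewrite lee_fin sqr_ge0.
Qed.

End normal_second_moment.

Section std_normal_rv.
Context {R : realType} {d} {T : measurableType d} (P : probability T R).
Variable X : T -> R.
Hypotheses (mX : measurable_fun setT X) (normalX : std_normal_rv P X).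

(* [f] lives on [measurableTypeR R], the measurable space carrying [normal_prob]. *)
Lemma integral_std_normal_rv (f : measurableTypeR R -> \bar R) :
  measurable_fun setT f -> (forall x, 0 <= f x)%E ->
  (\int[P]_w f (X w) = \int[normal_prob 0 1]_x f x)%E.
Proof.
move=> mf f0; pose X' : T -> measurableTypeR R := X.
have mX' : measurable_fun setT X' by move=> ? A mA; exact: mX.
rewrite -[in LHS](preimage_setT X').
rewrite -(ge0_integral_pushforward mX' P measurableT mf (fun y _ => f0 y)).
by apply: eq_measure_integral => A mA _; exact: normalX.
Qed.

Lemma std_normal_rv_sqr : (\int[P]_w (X w ^+ 2)%:E = std_normal_moment2%:E)%E.
Proof.
rewrite (@integral_std_normal_rv (fun x : measurableTypeR R => (x ^+ 2)%:E)).
- exact: std_normal_moment2E.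
- by apply/measurable_EFinP; exact: measurable_funX.
- by move=> x; rewrite lee_fin sqr_ge0.
Qed.

End std_normal_rv.

Section between.
Context {R : realType}.

Definition between (x y : R) : set R := `[x, y[ `|` `[y, x[.

Lemma betweenC x y : between x y = between y x.
Proof. exact: setUC. Qed.

Lemma lebesgue_measure_between x y : lebesgue_measure (between x y) = (`|x - y|)%:E.
Proof.
wlog xy : x y / x <= y.
  by move=> wlog; case: (leP x y) => [/wlog //|/ltW/wlog]; rewrite betweenC distrC.
rewrite /between [X in _ `|` X]set_itv_ge ?bnd_simp -?leNgt // setU0.
rewrite lebesgue_measure_itv /= lte_fin distrC ger0_norm ?subr_ge0 //.
have [<-|xny] := eqVneq x y; first by rewrite ltxx subrr.
by rewrite lt_neqAle xny xy.
Qed.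

End between.

Section mutual_independence.
Local Open Scope ereal_scope.
Context d (T : measurableType d) (R : realType) (P : probability T R).
Variables (I : finType) (Z : I -> T -> R).
Hypotheses (mZ : forall i, measurable_fun setT (Z i))
           (indepZ : mutually_independent P Z).

Lemma mutually_independent_seq (s : seq I) (B : I -> set R) :
  uniq s -> (forall i, measurable (B i)) ->
  P (\big[setI/setT]_(i <- s) Z i @^-1` B i) = \prod_(i <- s) P (Z i @^-1` B i).
Proof.
move=> us mB; pose A i := if i \in s then B i else setT.
have mA i : measurable (A i) by rewrite /A; case: ifP.
have AsE : \bigcap_(i in [set: I]) Z i @^-1` A i = \bigcap_(i in [set` s]) Z i @^-1` B i.
  apply/seteqP; split => t Zt i /= Hi; first by have := Zt i Logic.I; rewrite /A /= Hi.
  by rewrite /A; case: ifP => // si; exact: Zt.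
rewrite -bigcap_seq -AsE indepZ // [RHS]big_uniq // [RHS]big_mkcond /=.
apply: eq_bigr => i _; rewrite /A; case: ifP => // _.
by rewrite preimage_setT probability_setT.
Qed.

Lemma mutually_independent_cat (s1 s2 : seq I) (B1 B2 : I -> set R) :
  uniq (s1 ++ s2) -> (forall i, measurable (B1 i)) -> (forall i, measurable (B2 i)) ->
  P ((\big[setI/setT]_(i <- s1) Z i @^-1` B1 i) `&` \big[setI/setT]_(i <- s2) Z i @^-1` B2 i) =
  P (\big[setI/setT]_(i <- s1) Z i @^-1` B1 i) * P (\big[setI/setT]_(i <- s2) Z i @^-1` B2 i).
Proof.
move=> u12 mB1 mB2; have /and3P[u1 s12 u2] : [&& uniq s1, ~~ has (mem s1) s2 & uniq s2].
  by rewrite -cat_uniq.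
pose B i := if i \in s1 then B1 i else B2 i.
have mB i : measurable (B i) by rewrite /B; case: ifP.
have B1E : \big[setI/setT]_(i <- s1) Z i @^-1` B1 i = \big[setI/setT]_(i <- s1) Z i @^-1` B i.
  by apply: eq_big_seq => i i1; rewrite /B i1.
have B2E : \big[setI/setT]_(i <- s2) Z i @^-1` B2 i = \big[setI/setT]_(i <- s2) Z i @^-1` B i.
  apply: eq_big_seq => i /= i2; rewrite /B ifN //.
  by apply: contra s12 => i1; apply/hasP; exists i.
rewrite B1E B2E -big_cat /= mutually_independent_seq // big_cat /=.
by rewrite !mutually_independent_seq.
Qed.

Lemma mutually_independent_pairs (a b c e : I) (A1 A2 A3 A4 : set R) :
  uniq [:: a; b; c; e] ->
  measurable A1 -> measurable A2 -> measurable A3 -> measurable A4 ->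
  P ((Z a @^-1` A1 `&` Z b @^-1` A2) `&` (Z c @^-1` A3 `&` Z e @^-1` A4)) =
  P (Z a @^-1` A1 `&` Z b @^-1` A2) * P (Z c @^-1` A3 `&` Z e @^-1` A4).
Proof.
move=> u mA1 mA2 mA3 mA4.
have ba : b != a by apply: contraTneq u => ->; rewrite /= mem_head.
have ec : e != c by apply: contraTneq u => ->; rewrite /= !inE eqxx /= !andbF.
have pairE x y (X Y : set R) : y != x ->
    \big[setI/setT]_(i <- [:: x; y]) Z i @^-1` (if i == x then X else Y) =
    Z x @^-1` X `&` Z y @^-1` Y.
  by move=> yx; rewrite !big_cons big_nil setIT eqxx (negbTE yx).
rewrite -(pairE a b) // -(pairE c e) //.
by apply: mutually_independent_cat => // i; case: ifP.
Qed.

Definition straddles (a b : I) (t : R) : set T :=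
  Z a @^-1` `]-oo, t] `&` Z b @^-1` `]t, +oo[.

Definition between_graph (a b : I) : set (T * R) :=
  [set z | between (Z a z.1) (Z b z.1) z.2].

Lemma measurable_straddles a b t : measurable (straddles a b t).
Proof.
by apply: measurableI; rewrite -[X in measurable X]setTI; apply: mZ => //;
  exact: measurable_itv.
Qed.

Lemma straddles_disjoint a b t : straddles a b t `&` straddles b a t = set0.
Proof.
apply/seteqP; split => // w; rewrite /straddles /= !in_itv /= !andbT.
by move=> [[_ t_b] [b_t _]]; have := lt_le_trans t_b b_t; rewrite ltxx.
Qed.

Lemma xsection_between_graph a b w :
  xsection (between_graph a b) w = between (Z a w) (Z b w).
Proof. by rewrite xsectionE. Qed.

Lemma ysection_between_graph a b t :
  ysection (between_graph a b) t = straddles a b t `|` straddles b a t.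
Proof.
apply/seteqP; split => w; rewrite /straddles /between /= !in_itv /= ?andbT.
  by move/ysectionP => /= [] /andP[? ?]; [left|right].
by move=> H; apply/ysectionP; case: H => -[? ?]; [left|right]; apply/andP; split.
Qed.

Lemma measurable_between_graph a b : measurable (between_graph a b).
Proof.
pose f (z : T * R) :=
  ((Z a z.1 <= z.2) && (z.2 < Z b z.1) || (Z b z.1 <= z.2) && (z.2 < Z a z.1))%R.
have -> : between_graph a b = f @^-1` [set true].
  by apply/seteqP; split => z; rewrite /between_graph /between /f /= !in_itv /= => /orP.
have mZ1 i : measurable_fun setT (fun z : T * R => Z i z.1).
  exact: measurableT_comp (mZ i) measurable_fst.
rewrite -[X in measurable X]setTI; apply: (_ : measurable_fun setT f) => //.
by apply: measurable_or; apply: measurable_and;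
  solve [apply: measurable_fun_ler => //|apply: measurable_fun_ltr => //].
Qed.

Lemma independent_between_graphs a b c e t s : uniq [:: a; b; c; e] ->
  P (ysection (between_graph a b) t `&` ysection (between_graph c e) s) =
  P (ysection (between_graph a b) t) * P (ysection (between_graph c e) s).
Proof.
move=> u; rewrite !ysection_between_graph.
have mS := measurable_straddles.
have mU x y r : measurable (straddles x y r `|` straddles y x r) by exact: measurableU.
have swapl x y z w : uniq [:: x; y; z; w] -> uniq [:: y; x; z; w].
  by rewrite (perm_uniq (permEl (perm_catCA [:: y] [:: x] [:: z; w]))).
have swapr x y z w : uniq [:: x; y; z; w] -> uniq [:: x; y; w; z].
  by rewrite (perm_uniq (permEl (perm_catl [:: x; y] (permEl (perm_catC [:: w] [:: z]))))).
have indep_straddles x y z w : uniq [:: x; y; z; w] ->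
    P (straddles z w s `&` straddles x y t) = P (straddles z w s) * P (straddles x y t).
  by move=> uxyzw; rewrite setIC muleC; apply: mutually_independent_pairs => //;
    exact: measurable_itv.
have indep_left x y : uniq [:: x; y; c; e] ->
    P (straddles x y t `&` (straddles c e s `|` straddles e c s)) =
    P (straddles x y t) * P (straddles c e s `|` straddles e c s).
  move=> uxy; rewrite setIC muleC.
  apply: measure_setUI_mul (straddles_disjoint _ _ _) _ _ => //.
  - exact: indep_straddles.
  - by apply: indep_straddles; exact: swapr.
apply: measure_setUI_mul (straddles_disjoint _ _ _) _ _ => //.
- exact: indep_left.
- by apply: indep_left; exact: swapl.
Qed.

Lemma integral_abs_sub_mul a b c e : uniq [:: a; b; c; e] ->
  \int[P]_w (`|Z a w - Z b w| * `|Z c w - Z e w|)%:E =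
  \int[P]_w (`|Z a w - Z b w|)%:E * \int[P]_w (`|Z c w - Z e w|)%:E.
Proof.
move=> u; have absE i j w : (`|Z i w - Z j w|)%:E =
    lebesgue_measure (xsection (between_graph i j) w).
  by rewrite xsection_between_graph lebesgue_measure_between.
under eq_integral do rewrite EFinM !absE.
under [X in X * _]eq_integral do rewrite absE.
under [X in _ * X]eq_integral do rewrite absE.
apply: integral_measure_xsectionM_indep; try exact: measurable_between_graph.
by move=> t s; exact: independent_between_graphs.
Qed.

End mutual_independence.

Section grid_total_variation.
Local Open Scope ereal_scope.
Context (R : realType) (n : nat) d (T : measurableType d) (P : probability T R).
Variable Z : grid_vertex n -> T -> R.
Hypotheses (mZ : forall u, measurable_fun setT (Z u))
           (indepZ : mutually_independent P Z)
           (normalZ : forall u, std_normal_rv P (Z u)).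
Local Notation K := (@std_normal_moment2 R).

Definition edge_absdiff (p : grid_vertex n * grid_vertex n) (t : T) : R :=
  `|Z p.1 t - Z p.2 t|%R.

Lemma TV_edge_absdiff :
  (fun t => TV (fun u => Z u t)) = (\sum_(p | grid_edge p) edge_absdiff p)%R.
Proof. by rewrite fct_sumE; apply/funext => t; rewrite /TV pair_big_dep. Qed.

Lemma measurable_edge_absdiff p : measurable_fun setT (edge_absdiff p).
Proof. by apply: measurableT_comp => //; exact: measurable_funB. Qed.

Lemma integral_edge_absdiff_sqr_le p :
  \int[P]_t ((edge_absdiff p t) ^+ 2)%:E <= (4 * K)%:E.
Proof.
have mZ2 u : measurable_fun setT (fun t => (2 * Z u t ^+ 2)%:E).
  by apply/measurable_EFinP; apply: measurable_funM => //; exact: measurable_funX.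
have Z2_ge0 u t : 0 <= (2 * Z u t ^+ 2)%:E by rewrite lee_fin mulr_ge0 ?sqr_ge0.
have intZ2 u : \int[P]_t (2 * Z u t ^+ 2)%:E = (2 * K)%:E.
  under eq_integral do rewrite EFinM.
  rewrite ge0_integralZl_EFin ?std_normal_rv_sqr //.
  - by move=> t _; rewrite lee_fin sqr_ge0.
  - by apply/measurable_EFinP; exact: measurable_funX.
apply: (@le_trans _ _ (\int[P]_t ((2 * Z p.1 t ^+ 2)%:E + (2 * Z p.2 t ^+ 2)%:E))).
  apply: ge0_le_integral => //.
  - by move=> t _; rewrite lee_fin sqr_ge0.
  - by apply/measurable_EFinP; apply: measurable_funX; exact: measurable_edge_absdiff.
  - exact: emeasurable_funD.
  move=> t _; rewrite -EFinD lee_fin /edge_absdiff real_normK ?num_real //.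
  by have := sqr_ge0 (Z p.1 t + Z p.2 t); rewrite !sqrrD sqrrN; lra.
by rewrite ge0_integralD // !intZ2 -EFinD lee_fin; lra.
Qed.

Lemma edge_absdiff_Lfun2 p : edge_absdiff p \in Lfun P 2%:E.
Proof.
apply: Lfun2_sqr_lty; first exact: measurable_edge_absdiff.
exact: le_lt_trans (integral_edge_absdiff_sqr_le p) (ltry _).
Qed.

Lemma variance_edge_absdiff_le p : 'V_P[edge_absdiff p] <= (4 * K)%:E.
Proof.
have p1 : edge_absdiff p \in Lfun P 1.
  by apply: Lfun_subset12 (edge_absdiff_Lfun2 p); exact: fin_num_measure.
rewrite varianceE ?edge_absdiff_Lfun2 // leeBlDr ?fin_numX ?expectation_fin_num //.
apply: lee_paddr; first exact: sqre_ge0.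
by apply: le_trans (integral_edge_absdiff_sqr_le p); rewrite unlock.
Qed.

Lemma covariance_edge_absdiff p q : grid_edge p -> grid_edge q -> ~~ edges_meet p q ->
  covariance P (edge_absdiff p) (edge_absdiff q) = 0.
Proof.
move=> /andP[/grid_adj_neq p12 _] /andP[/grid_adj_neq q12 _].
rewrite /edges_meet !negb_or => /and4P[p1q1 p1q2 p2q1 p2q2].
have u : uniq [:: p.1; p.2; q.1; q.2].
  by rewrite /= !inE !negb_or p12 p1q1 p1q2 p2q1 p2q2 q12.
have [p1 q1] : edge_absdiff p \in Lfun P 1 /\ edge_absdiff q \in Lfun P 1.
  by split; apply: Lfun_subset12 (edge_absdiff_Lfun2 _); exact: fin_num_measure.
rewrite covarianceE //; last exact: Lfun2_mul_Lfun1 (edge_absdiff_Lfun2 _) (edge_absdiff_Lfun2 _).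
have -> : 'E_P[edge_absdiff p * edge_absdiff q] = 'E_P[edge_absdiff p] * 'E_P[edge_absdiff q].
  by rewrite unlock; exact: (integral_abs_sub_mul mZ indepZ).
by rewrite subee // fin_numM // expectation_fin_num.
Qed.

Lemma variance_TV_le :
  'V_P[fun t => TV (fun u => Z u t)] <= (512 * K * (n * (n - 1))%:R)%:E.
Proof.
rewrite TV_edge_absdiff.
apply: le_trans (variance_sum_le (dep := @edges_meet n) (B := 4 * K) _ _ _) _.
- by move=> p _; exact: edge_absdiff_Lfun2.
- by move=> p _; exact: variance_edge_absdiff_le.
- by move=> p q; exact: covariance_edge_absdiff.
rewrite lee_fin (_ : 512 * K * _ = (128 * (n * (n - 1)))%:R * (4 * K))%R; last first.
  by rewrite natrM; ring.
by rewrite ler_wpM2r ?mulr_ge0 ?std_normal_moment2_ge0 // ler_nat sum_meeting_edge_pairs_le.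
Qed.

End grid_total_variation.

Theorem lemma6p4 (R : realType) :
  exists C : R, 0 < C /\
  forall (n : nat) (d : measure_display) (T : measurableType d)
    (P : probability T R) (Z : grid_vertex n -> T -> R),
    (forall u, measurable_fun setT (Z u)) ->
    mutually_independent P Z ->
    (forall u, std_normal_rv P (Z u)) ->
    ('V_P[fun t => TV (fun u => Z u t)] <= (C * (n * (n - 1))%:R)%:E)%E.
Proof.
have K0 := @std_normal_moment2_ge0 R.
exists (512 * std_normal_moment2 + 1); split; first lra.
move=> n d T P Z mZ indepZ normalZ.
apply: le_trans (variance_TV_le mZ indepZ normalZ) _.
by rewrite lee_fin ler_wpM2r ?ler0n //; lra.
Qed.
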